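(* Under the hypotheses of Theorem 9 (connected $G$, non-cut edge $e=(i,j)$, $i\ne j$, $a_{ij}>0$, $v=e_i-e_j$, $\widehat A=A+a_{ij}vv^T$, $c(e)=K(D^{-1}\widehat A)-K(D^{-1}A)$), the matrix \[ S=D-A+\frac{1}{\|d\|_1}dd^T \] is symmetric positive definite, and with $x=S^{-1}v$, $\alpha=a_{ij}(x_i-x_j)$, $\beta=a_{ij}x^TDx$, one has $\alpha\neq 1$ and \[ c(e)=\frac{\beta}{1-\alpha}. \]
   Context: Graphs are undirected and possibly weighted on vertex set $\{1,\dots,n\}$, with symmetric nonnegative adjacency matrix $A=(a_{k\ell})$; $d=A\mathbf 1$ (all entries assumed positive), $D=\mathrm{diag}(d)$, $\|d\|_1=\sum_kd_k$; $e_k$ is the $k$-th column of the identity and $\mathbf 1$ the all-ones vector. For an irreducible row-stochastic matrix $Q$ with stationary vector $\pi$, the Kemeny constant is $K(Q)=\sum_j\pi_j m_{kj}$, where $m_{kj}$ is the expected first passage time from $k$ to $j$ ($m_{kk}=0$), independent of $k$; equivalently $K(Q)=\sum_{\ell=2}^n 1/(1-\lambda_\ell)$, where $1=\lambda_1,\lambda_2,\dots,\lambda_n$ are the eigenvalues of $Q$. The edge $e$ is a cut-edge if the graph obtained by deleting $e$ is disconnected. *)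

From HB Require Import structures.
From mathcomp Require Import all_boot all_order all_algebra.
From mathcomp Require Import complex.
Set Implicit Arguments. Unset Strict Implicit. Unset Printing Implicit Defensive.
Import Order.TTheory GRing.Theory Num.Theory.
Local Open Scope ring_scope.

Section Defs.
Variable R : rcfType.

Definition degv n (A : 'M[R]_n) : 'cV[R]_n := A *m const_mx 1.
Definition degmx n (A : 'M[R]_n) : 'M[R]_n := diag_mx (degv A)^T.
Definition vol n (A : 'M[R]_n) : R := \sum_k degv A k 0.

Definition adjrel n (A : 'M[R]_n) : rel 'I_n := fun k l => 0 < A k l.
Definition connected n (A : 'M[R]_n) : Prop :=
  forall k l : 'I_n, connect (adjrel A) k l.

Definition del_edge n (A : 'M[R]_n) (i j : 'I_n) : 'M[R]_n :=
  \matrix_(k, l) (if ((k == i) && (l == j)) || ((k == j) && (l == i))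
                  then 0 else A k l).
Definition cut_edge n (A : 'M[R]_n) (i j : 'I_n) : Prop :=
  ~ connected (del_edge A i j).

Definition evec n (k : 'I_n) : 'cV[R]_n := delta_mx k 0.

(* eigenvalues of Q (with multiplicity), computed in R[i] as the roots of
   the characteristic polynomial *)
Definition spectrum n (Q : 'M[R]_n) : seq R[i] :=
  sval (closed_field_poly_normal (char_poly (map_mx (real_complex R) Q))).

(* Kemeny constant K(Q) = sum_{l >= 2} 1/(1 - lambda_l), where lambda_1 = 1 *)
Definition kemeny n (Q : 'M[R]_n) : R[i] :=
  \sum_(lam <- rem 1 (spectrum Q)) (1 - lam)^-1.

Definition posdef n (S : 'M[R]_n) : Prop :=
  forall x : 'cV[R]_n, x != 0 -> 0 < (x^T *m S *m x) 0 0.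

End Defs.

(** The walk [P = D^-1 A] fixes [1], and [pi = d / ||d||_1] has [pi^T 1 = 1];
a rank-one bordering argument on characteristic polynomials shows that
[I - P + 1 pi^T = D^-1 S] has the eigenvalue 1 together with [1 - lambda] for
the non-principal eigenvalues [lambda] of [P], so [K(P) = tr(S^-1 D) - 1].
The quadratic form of [S] is half the Dirichlet energy of [A] plus
[(d^T z)^2 / ||d||_1], which on a connected graph vanishes only at [z = 0].
Moving the weight of [e] onto loops at [i] and [j] gives [Ahat] with the same
degrees and shifted Laplacian [S - a_ij v v^T], still positive definite since
[e] is not a cut-edge; hence [alpha <> 1], and the Sherman-Morrison formula
turns [tr((S - a_ij v v^T)^-1 D) - tr(S^-1 D)] into [beta / (1 - alpha)]. *)

From HB Require Import structures.
From mathcomp Require Import all_boot all_order all_algebra.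
From mathcomp Require Import complex ring.

Set Implicit Arguments. Unset Strict Implicit. Unset Printing Implicit Defensive.
Import Order.TTheory GRing.Theory Num.Theory.
Local Open Scope ring_scope.

Lemma prodrMl_seq (R : comNzRingType) (I : Type) (r : seq I) (c : R) (F : I -> R) :
  \prod_(i <- r) (c * F i) = c ^+ size r * \prod_(i <- r) F i.
Proof. by rewrite big_split /= big_const_seq count_predT iter_mulr_1. Qed.

Lemma eq_poly_on_neq0 (R : numDomainType) (p q : {poly R}) :
  (forall x, x != 0 -> p.[x] = q.[x]) -> p = q.
Proof.
move=> pq; apply/eqP; rewrite -subr_eq0; apply/eqP.
pose rs := [seq i.+1%:R : R | i <- iota 0 (size (p - q))].
apply: (@roots_geq_poly_eq0 _ _ rs); last by rewrite size_map size_iota.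
  apply/allP => _ /mapP [i _ ->].
  by rewrite rootE hornerD hornerN pq ?subrr ?pnatr_eq0.
by rewrite map_inj_uniq ?iota_uniq // => a b /eqP; rewrite eqr_nat eqSS => /eqP.
Qed.

Lemma horner_char_poly (R : comNzRingType) n (A : 'M[R]_n) x :
  (char_poly A).[x] = \det (x%:M - A).
Proof.
rewrite /char_poly -[_.[x]]/(horner_eval x _) -det_map_mx; congr (\det _).
apply/matrixP => k l; rewrite !mxE /horner_eval.
by rewrite rmorphB rmorphMn /= /horner_eval hornerX hornerC.
Qed.

Section SplitCharPoly.
Variables (F : numFieldType) (n : nat) (M : 'M[F]_n) (s : seq F).
Hypothesis charM : char_poly M = \prod_(z <- s) ('X - z%:P).

Lemma size_split_char_poly : size s = n.
Proof. by have := size_char_poly M; rewrite charM size_prod_XsubC => -[]. Qed.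

Lemma mxtrace_split_char_poly : \tr M = \sum_(z <- s) z.
Proof.
have [n0 | n_gt0] := posnP n.
  have /size0nil -> : size s = 0 by rewrite size_split_char_poly.
  by rewrite big_nil /mxtrace big1 // => k _; have := ltn_ord k; rewrite {2}n0.
apply: oppr_inj; rewrite -char_poly_trace // charM -coefPn_prod_XsubC.
  by rewrite size_split_char_poly.
by rewrite size_split_char_poly -lt0n.
Qed.

Lemma det_split_char_poly : \det M = \prod_(z <- s) z.
Proof.
apply: (@mulfI _ ((-1) ^+ n)); first by rewrite signr_eq0.
by rewrite -char_poly_det charM coef0_prod_XsubC size_split_char_poly.
Qed.

Lemma char_poly_scalar_sub c :
  char_poly (c%:M - M) = \prod_(z <- map (fun z => c - z) s) ('X - z%:P).
Proof.
apply: eq_poly_on_neq0 => x _; rewrite horner_char_poly big_map horner_prod.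
have -> : x%:M - (c%:M - M) = - ((c - x)%:M - M).
  apply/matrixP => k l; rewrite !mxE.
  by case: (k == l); rewrite /= ?mulr1n ?mulr0n; ring.
rewrite -scaleN1r detZ -horner_char_poly charM.
rewrite horner_prod -size_split_char_poly -prodrMl_seq.
by apply: eq_bigr => z _; rewrite !hornerXsubC; ring.
Qed.

Lemma char_poly_invmx : M \in unitmx ->
  char_poly (invmx M) = \prod_(z <- map GRing.inv s) ('X - z%:P).
Proof.
move=> uM; have detM0 : \det M != 0 by rewrite -unitfE -unitmxE.
have s_neq0 z : z \in s -> z != 0.
  move=> zs; apply: contraNneq detM0 => z0.
  rewrite det_split_char_poly prodf_seq_eq0; apply/hasP.
  by exists z => //=; apply/eqP.
apply: eq_poly_on_neq0 => x x0; rewrite horner_char_poly big_map.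
have -> : x%:M - invmx M = invmx M *m ((- x) *: (x^-1%:M - M)).
  rewrite -scalemxAr mulmxBr mul_mx_scalar mulVmx // scalerBr scalerA.
  by rewrite mulNr divff // scaleN1r scaleNr opprK scalemx1 addrC.
rewrite det_mulmx detZ -horner_char_poly charM det_inv.
rewrite det_split_char_poly -size_split_char_poly -prodfV !horner_prod.
rewrite -prodrMl_seq -big_split /=; apply: eq_big_seq => z /s_neq0 z0.
by rewrite !hornerXsubC; field; rewrite x0 z0.
Qed.

End SplitCharPoly.

(** Both sides are [X^n] times the determinant of the bordered matrix
[[X - C, u], [w, 1]], factored in two ways. *)
Lemma char_poly_add_rank1 (F : fieldType) n (C : 'M[F]_n) (u : 'cV_n) (w : 'rV_n) :
  C *m u = 0 -> w *m u = 1%:M ->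
  char_poly (C + u *m w) * 'X = char_poly C * ('X - 1).
Proof.
move=> Cu wu; set up := map_mx polyC u; set wp := map_mx polyC w.
set Q := block_mx (char_poly_mx C) up wp (1%:M : 'M_1).
have detQ : block_mx 1%:M up 0 (1%:M : 'M_1) *m
            block_mx (char_poly_mx (C + u *m w)) 0 wp (1%:M : 'M_1) = Q.
  rewrite mulmx_block !mul1mx !mulmx0 !mul0mx ?addr0 ?add0r ?mulmx1.
  rewrite /Q; congr block_mx; rewrite /char_poly_mx map_mxD map_mxM -/up -/wp.
  by rewrite opprD addrA subrK.
have QX : Q *m block_mx ('X%:M) (- up) 0 ('X%:M : 'M_1) =
          block_mx ('X *: char_poly_mx C) 0 ('X *: wp) (('X - 1)%:M : 'M_1).
  rewrite mulmx_block ?mulmx0 ?addr0 ?mul_mx_scalar ?mul1mx; congr block_mx.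
  - rewrite mulmxN /char_poly_mx mulmxBl mul_scalar_mx -map_mxM Cu map_mx0.
    by rewrite subr0 addNr.
  - rewrite mulmxN -map_mxM wu map_scalar_mx /= polyC1 scalemx1 addrC.
    by rewrite (raddfB (@scalar_mx _ 1)).
have := congr1 determinant QX; rewrite -detQ !det_mulmx !det_ublock !det_lblock.
rewrite !det_scalar !detZ !expr1n !expr1 !mul1r !mulr1.
have Xn0 : ('X^n : {poly F}) != 0 by rewrite expf_neq0 // polyX_eq0.
by rewrite mulrC -!mulrA => /(mulfI Xn0); rewrite mulrC.
Qed.

Lemma qformE (R : comNzRingType) n (M : 'M[R]_n) (z : 'cV[R]_n) :
  (z^T *m M *m z) 0 0 = \sum_k \sum_l z k 0 * M k l * z l 0.
Proof.
rewrite mxE exchange_big /=; apply: eq_bigr => l _.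
by rewrite mxE mulr_suml; apply: eq_bigr => k _; rewrite mxE.
Qed.

Lemma invmx_mul (R : comUnitRingType) n (M N : 'M[R]_n) :
  M \in unitmx -> N \in unitmx -> invmx (M *m N) = invmx N *m invmx M.
Proof.
move=> unitM unitN; have unitMN : M *m N \in unitmx by rewrite unitmx_mul unitM.
rewrite -[RHS](mulKmx unitMN) -mulmxA (mulmxA N) mulmxV // mul1mx mulmxV //.
by rewrite mulmx1.
Qed.

Lemma posdef_unitmx (R : rcfType) n (S : 'M[R]_n) : posdef S -> S \in unitmx.
Proof.
move=> Spd; apply: contraT; rewrite unitmxE unitfE negbK => /det0P [w w_neq0 wS].
by have := Spd w^T; rewrite trmx_eq0 trmxK wS mul0mx mxE ltxx => /(_ w_neq0).
Qed.

Section ShermanMorrison.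
Variables (F : fieldType) (n : nat) (S : 'M[F]_n) (u : 'cV[F]_n) (w : 'rV[F]_n).
Hypothesis unitS : S \in unitmx.
Let alpha := (w *m invmx S *m u) 0 0.

Lemma mulmx_sub_rank1_invmx :
  (S - u *m w) *m (invmx S *m u) = (1 - alpha) *: u.
Proof.
rewrite mulmxBl mulmxA mulmxV // mul1mx -!mulmxA (mulmxA w) [w *m _ *m _]mx11_scalar.
by rewrite mul_mx_scalar scalerBl scale1r.
Qed.

Lemma sub_rank1_unitmx_neq1 : (S - u *m w) \in unitmx -> alpha != 1.
Proof.
move=> unitT; apply/eqP => alpha1.
have Sinv_u0 : invmx S *m u = 0.
  by rewrite -[LHS](mulKmx unitT) mulmx_sub_rank1_invmx alpha1 subrr scale0r mulmx0.
move: alpha1; rewrite /alpha -mulmxA Sinv_u0 mulmx0 mxE => /eqP.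
by rewrite eq_sym oner_eq0.
Qed.

Lemma invmx_sub_rank1 : alpha != 1 ->
  invmx (S - u *m w) = invmx S + (1 - alpha)^-1 *: (invmx S *m u *m (w *m invmx S)).
Proof.
move=> alpha_neq1; have alpha1 : 1 - alpha != 0 by rewrite subr_eq0 eq_sym.
set B := invmx S + _.
have TB : (S - u *m w) *m B = 1%:M.
  rewrite mulmxDr -scalemxAr mulmxA mulmx_sub_rank1_invmx mulmxBl mulmxV //.
  by rewrite -scalemxAl -mulmxA scalerA mulVf // scale1r subrK.
by rewrite -[B](mulKmx (mulmx1_unit TB).1) TB mulmx1.
Qed.
End ShermanMorrison.

Section SymmetricRankOneUpdate.
Variables (F : fieldType) (n : nat) (S : 'M[F]_n) (a : F) (v : 'cV[F]_n).
Hypothesis unitS : S \in unitmx.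
Let x := invmx S *m v.
Let alpha := a * (v^T *m x) 0 0.

Lemma sub_sym_rank1_alphaE : (v^T *m invmx S *m (a *: v)) 0 0 = alpha.
Proof. by rewrite -scalemxAr mxE -mulmxA. Qed.

Lemma sub_sym_rank1_unitmx_neq1 : S - a *: (v *m v^T) \in unitmx -> alpha != 1.
Proof.
by rewrite scalemxAl -sub_sym_rank1_alphaE; apply: sub_rank1_unitmx_neq1.
Qed.

Lemma mxtrace_invmx_sub_sym_rank1 (D : 'M[F]_n) : S^T = S -> alpha != 1 ->
  \tr (invmx (S - a *: (v *m v^T)) *m D) - \tr (invmx S *m D) =
  a * (x^T *m D *m x) 0 0 / (1 - alpha).
Proof.
move=> Ssym alpha_neq1; have vTSinv : v^T *m invmx S = x^T.
  by rewrite trmx_mul trmx_inv Ssym.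
rewrite scalemxAl invmx_sub_rank1 ?sub_sym_rank1_alphaE //.
rewrite vTSinv -scalemxAr -scalemxAl scalerA mulmxDl mxtraceD addrAC subrr add0r.
by rewrite -scalemxAl mxtraceZ -mulmxA mxtrace_mulC mulmxA trace_mx11 [RHS]mulrC mulrA.
Qed.

End SymmetricRankOneUpdate.

Section Kemeny.
Variable R : rcfType.
Local Notation rc := (real_complex R).

Lemma char_poly_spectrum n (Q : 'M[R]_n) :
  char_poly (map_mx rc Q) = \prod_(z <- spectrum Q) ('X - z%:P).
Proof.
rewrite /spectrum; case: closed_field_poly_normal => r /= charQ.
by rewrite {1}charQ (monicP (char_poly_monic _)) scale1r.
Qed.

(** By [char_poly_add_rank1], the spectrum of [I - P + u w] is that of
[I - P] with one eigenvalue [0] replaced by [1]. *)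
Lemma kemeny_mxtrace n (P : 'M[R]_n) (u : 'cV[R]_n) (w : 'rV[R]_n) :
  P *m u = u -> w *m u = 1%:M -> (1%:M - P + u *m w) \in unitmx ->
  kemeny P = rc (\tr (invmx (1%:M - P + u *m w))) - 1.
Proof.
move=> Pu wu unitB; set s := spectrum P.
have charC := char_poly_scalar_sub (char_poly_spectrum P) 1.
have charBX : char_poly (map_mx rc (1%:M - P + u *m w)) * 'X =
              char_poly (1%:M - map_mx rc P) * ('X - 1).
  have Cu : (1%:M - P) *m u = 0 by rewrite mulmxBl mul1mx Pu subrr.
  have eX : map_poly rc ('X - 1) = 'X - 1 by rewrite rmorphB /= map_polyX rmorph1.
  have := congr1 (map_poly rc) (char_poly_add_rank1 Cu wu).
  by rewrite !rmorphM /= eX map_polyX !map_char_poly map_mxB map_mx1.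
have s1 : 1 \in s.
  have := congr1 (horner^~ 0) charBX; rewrite !hornerM hornerX mulr0 => /esym/eqP.
  rewrite mulf_eq0 !hornerE oppr_eq0 oner_eq0 orbF -rootE charC root_prod_XsubC.
  by case/mapP => z zs /eqP; rewrite eq_sym subr_eq0 => /eqP ->.
have charB : char_poly (map_mx rc (1%:M - P + u *m w)) =
    \prod_(z <- 1 :: map (fun z => 1 - z) (rem 1 s)) ('X - z%:P).
  apply: (@mulIf _ _ (negbT (polyX_eq0 _))); rewrite charBX charC.
  rewrite (perm_big _ (perm_map _ (perm_to_rem s1))) /= !big_cons subrr polyC0 subr0.
  by rewrite polyC1; ring.
have unitBrc : map_mx rc (1%:M - P + u *m w) \in unitmx by rewrite map_unitmx.
have := mxtrace_split_char_poly (char_poly_invmx charB unitBrc).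
rewrite -map_invmx trace_map_mx => ->.
by rewrite /kemeny -/s /= big_cons invr1 !big_map addrC addKr.
Qed.

End Kemeny.

Section Laplacian.
Variables (R : rcfType) (n : nat).
Implicit Types (A : 'M[R]_n) (z : 'cV[R]_n).

Definition laplacian A := degmx A - A.

Definition shifted_laplacian A :=
  laplacian A + (vol A)^-1 *: (degv A *m (degv A)^T).

(** Summed over ordered pairs, hence twice the usual Dirichlet energy. *)
Definition dirichlet A z := \sum_k \sum_l A k l * (z k 0 - z l 0) ^+ 2.

Lemma degvE A k : degv A k 0 = \sum_l A k l.
Proof. by rewrite mxE; apply: eq_bigr => l _; rewrite mxE mulr1. Qed.

Lemma degmxE A k l : degmx A k l = degv A k 0 *+ (k == l).
Proof. by rewrite 2!mxE. Qed.

Lemma vol_gt0 A : (0 < n)%N -> (forall k, 0 < degv A k 0) -> 0 < vol A.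
Proof.
move=> n_gt0 d_gt0; rewrite /vol (bigD1 (Ordinal n_gt0)) //=.
by rewrite ltr_pwDl // sumr_ge0 // => k _; exact: ltW.
Qed.

Lemma degmx_unitmx A : (forall k, 0 < degv A k 0) -> degmx A \in unitmx.
Proof.
move=> d_gt0; rewrite unitmxE unitfE det_diag; apply/prodf_neq0 => k _.
by rewrite mxE gt_eqF.
Qed.

Lemma degmx_mul_const1 A : degmx A *m const_mx 1 = degv A.
Proof. by apply/matrixP => k l; rewrite mul_diag_mx !mxE ord1 mulr1. Qed.

Lemma laplacian_qform A z : A^T = A ->
  (z^T *m laplacian A *m z) 0 0 = 2^-1 * dirichlet A z.
Proof.
move=> Asym; have Atr k l : A l k = A k l by rewrite -[in LHS]Asym mxE.
set Q := \sum_k \sum_l A k l * (z k 0 * (z k 0 - z l 0)).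
have qformQ : (z^T *m laplacian A *m z) 0 0 = Q.
  rewrite qformE; apply: eq_bigr => k _; rewrite /laplacian.
  under eq_bigr do rewrite mxE degmxE [(- A) _ _]mxE mulrDr mulrDl.
  rewrite big_split /= (bigD1 k) //= big1 ?addr0 => [|l lk]; last first.
    by rewrite eq_sym (negbTE lk) mulr0n mulr0 mul0r.
  rewrite eqxx mulr1n degvE mulr_sumr mulr_suml -big_split /=.
  by apply: eq_bigr => l _; ring.
have Qswap : \sum_k \sum_l A k l * (z l 0 * (z l 0 - z k 0)) = Q.
  rewrite exchange_big; apply: eq_bigr => l _; apply: eq_bigr => k _.
  by rewrite Atr.
have -> : dirichlet A z = Q + Q.
  rewrite -{2}Qswap -big_split; apply: eq_bigr => k _.
  by rewrite -big_split; apply: eq_bigr => l _ /=; ring.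
by rewrite qformQ; field.
Qed.

Lemma shifted_laplacian_qform A z :
  (z^T *m shifted_laplacian A *m z) 0 0 =
  (z^T *m laplacian A *m z) 0 0 + (vol A)^-1 * ((degv A)^T *m z) 0 0 ^+ 2.
Proof.
rewrite mulmxDr mulmxDl [LHS]mxE; congr (_ + _).
rewrite -scalemxAr -scalemxAl mxE (mulmxA z^T) -(mulmxA (z^T *m degv A)).
have -> : z^T *m degv A = ((degv A)^T *m z)^T by rewrite trmx_mul trmxK.
by rewrite mxE big_ord1 mxE expr2.
Qed.

Lemma shifted_laplacian_sym A : A^T = A -> (shifted_laplacian A)^T = shifted_laplacian A.
Proof.
move=> Asym; rewrite /shifted_laplacian /laplacian !linearD linearN /= linearZ /=.
by rewrite trmx_mul trmxK Asym /degmx tr_diag_mx.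
Qed.

Lemma dirichlet_ge0 A z : (forall k l, 0 <= A k l) -> 0 <= dirichlet A z.
Proof.
move=> A_ge0; apply: sumr_ge0 => k _; apply: sumr_ge0 => l _.
by rewrite mulr_ge0 ?sqr_ge0.
Qed.

Lemma dirichlet_eq0_edge A z : (forall k l, 0 <= A k l) -> dirichlet A z = 0 ->
  forall k l, 0 < A k l -> z k 0 = z l 0.
Proof.
move=> A_ge0 W0 k l Akl_gt0.
have term_ge0 k' l' : 0 <= A k' l' * (z k' 0 - z l' 0) ^+ 2.
  by rewrite mulr_ge0 ?sqr_ge0.
have row0 : \sum_l A k l * (z k 0 - z l 0) ^+ 2 = 0.
  by apply: (psumr_eq0P _ W0) => // k' _; apply: sumr_ge0 => l' _.
have /eqP := psumr_eq0P (fun l' _ => term_ge0 k l') row0 (i := l) isT.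
by rewrite mulf_eq0 gt_eqF //= sqrf_eq0 subr_eq0 => /eqP.
Qed.

Lemma connected_const A (T : eqType) (f : 'I_n -> T) : connected A ->
  (forall k l, 0 < A k l -> f k = f l) -> forall k l, f k = f l.
Proof.
move=> Aconn f_edge k l; apply/esym/eqP.
suff : (k \in [pred m | f m == f k]) = (l \in [pred m | f m == f k]).
  by rewrite !inE eqxx => /esym.
apply: closed_connect (Aconn k l) => p q pq.
by rewrite !inE (f_edge p q pq).
Qed.

Lemma posdef_shifted_laplacian A :
  A^T = A -> (forall k l, 0 <= A k l) -> (forall k, 0 < degv A k 0) ->
  connected A -> posdef (shifted_laplacian A).
Proof.
move=> Asym A_ge0 d_gt0 Aconn z z_neq0.
have [k0 zk0_neq0] : exists k, z k 0 != 0.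
  apply/existsP; apply: contraNT z_neq0 => /existsPn z0.
  by apply/eqP/matrixP => k l; rewrite ord1 mxE; apply/eqP/negbNE/z0.
have vol_pos : 0 < vol A := vol_gt0 (leq_ltn_trans (leq0n k0) (ltn_ord k0)) d_gt0.
rewrite shifted_laplacian_qform laplacian_qform //; set u := (degv A)^T *m z.
have hW_ge0 : 0 <= 2^-1 * dirichlet A z.
  by rewrite mulr_ge0 ?dirichlet_ge0 // invr_ge0 ler0n.
have t_ge0 : 0 <= (vol A)^-1 * u 0 0 ^+ 2.
  by rewrite mulr_ge0 ?sqr_ge0 // invr_ge0 (ltW vol_pos).
rewrite lt_def addr_ge0 // andbT paddr_eq0 //.
apply: contraNN zk0_neq0 => /andP [hW0 t0].
have W0 : dirichlet A z = 0.
  by move: hW0; rewrite mulf_eq0 invr_eq0 pnatr_eq0 => /eqP.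
have u0 : u 0 0 = 0.
  by move: t0; rewrite mulf_eq0 invr_eq0 (gt_eqF vol_pos) sqrf_eq0 => /eqP.
have z_const := connected_const Aconn (dirichlet_eq0_edge A_ge0 W0).
have : u 0 0 = z k0 0 * vol A.
  rewrite mxE mulr_sumr; apply: eq_bigr => k _.
  by rewrite mxE (z_const k k0) mulrC.
by rewrite u0 => /esym/eqP; rewrite mulf_eq0 (gt_eqF vol_pos) orbF.
Qed.

Lemma kemeny_walk A : (0 < n)%N -> (forall k, 0 < degv A k 0) ->
  shifted_laplacian A \in unitmx ->
  kemeny (invmx (degmx A) *m A) =
  real_complex R (\tr (invmx (shifted_laplacian A) *m degmx A)) - 1.
Proof.
move=> n_gt0 d_gt0 unitS; have unitD := degmx_unitmx d_gt0.
set one : 'cV[R]_n := const_mx 1; set pi := (vol A)^-1 *: (degv A)^T.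
have Dinv_d : invmx (degmx A) *m degv A = one.
  by rewrite -degmx_mul_const1 mulKmx.
have Pone : invmx (degmx A) *m A *m one = one by rewrite -mulmxA.
have pione : pi *m one = 1%:M.
  apply/matrixP => p q; rewrite !ord1 -scalemxAl [LHS]mxE [(_ *m _) _ _]mxE.
  under eq_bigr do rewrite [_^T _ _]mxE [one _ _]mxE mulr1.
  by rewrite mxE mulr1n mulVf // gt_eqF // vol_gt0.
have B_eq : 1%:M - invmx (degmx A) *m A + one *m pi =
            invmx (degmx A) *m shifted_laplacian A.
  rewrite /shifted_laplacian /laplacian !mulmxDr mulmxN mulVmx //.
  by rewrite -!scalemxAr mulmxA Dinv_d.
rewrite (kemeny_mxtrace Pone pione) B_eq ?unitmx_mul ?unitmx_inv ?unitD //.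
by rewrite invmx_mul ?unitmx_inv // invmxK.
Qed.

End Laplacian.

Lemma connected_le (R : rcfType) n (B B' : 'M[R]_n) :
  (forall k l, B k l <= B' k l) -> connected B -> connected B'.
Proof.
move=> BB' Bconn k l; apply: connect_sub (Bconn k l) => p q Bpq.
by apply: connect1; apply: lt_le_trans Bpq (BB' p q).
Qed.

Section EdgeToLoops.
Variables (R : rcfType) (n : nat) (i j : 'I_n).
Local Notation v := (evec R i - evec R j).

(** The matrix [Ahat] of the paper: the weight of the edge [{i,j}] is moved
onto loops at [i] and [j]. *)
Definition edge_to_loops (A : 'M[R]_n) := A + A i j *: (v *m v^T).

Lemma evec_subE k : v k 0 = (k == i)%:R - (k == j)%:R.
Proof. by rewrite !mxE !andbT. Qed.

Lemma tr_evec_sub_mul (y : 'cV[R]_n) : v^T *m y = (y i 0 - y j 0)%:M.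
Proof.
apply/matrixP => p q; rewrite !ord1 !mxE mulr1n.
under eq_bigr do rewrite mxE evec_subE mulrBl.
rewrite sumrB (bigD1 i) // big1 /= => [|k /negbTE->]; last by rewrite mul0r.
rewrite (bigD1 j) // big1 /= => [|k /negbTE->]; last by rewrite mul0r.
by rewrite !eqxx !mul1r !addr0.
Qed.

Lemma edge_to_loopsE A k l : edge_to_loops A k l = A k l + A i j * (v k 0 * v l 0).
Proof.
rewrite mxE; congr (_ + _); rewrite mxE; congr (_ * _).
by rewrite mxE big_ord1 [(evec R i - evec R j)^T _ _]mxE.
Qed.

Lemma degv_edge_to_loops A : degv (edge_to_loops A) = degv A.
Proof.
rewrite /degv mulmxDl -scalemxAl -mulmxA tr_evec_sub_mul !mxE subrr.
by rewrite mul_mx_scalar scale0r scaler0 addr0.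
Qed.

Lemma degmx_edge_to_loops A : degmx (edge_to_loops A) = degmx A.
Proof. by rewrite /degmx degv_edge_to_loops. Qed.

Lemma shifted_laplacian_edge_to_loops A :
  shifted_laplacian (edge_to_loops A) = shifted_laplacian A - A i j *: (v *m v^T).
Proof.
rewrite /shifted_laplacian /laplacian /degmx /vol degv_edge_to_loops.
by rewrite /edge_to_loops opprD !addrA (addrAC (_ - A)).
Qed.

Lemma edge_to_loops_sym A : A^T = A -> (edge_to_loops A)^T = edge_to_loops A.
Proof. by move=> Asym; rewrite linearD linearZ /= trmx_mul trmxK Asym. Qed.

Hypothesis neq_ij : i != j.

Lemma del_edge_le_edge_to_loops A : A^T = A -> 0 <= A i j ->
  forall k l, del_edge A i j k l <= edge_to_loops A k l.
Proof.
move=> Asym Aij_ge0 k l; have Aji : A j i = A i j by rewrite -[in LHS]Asym mxE.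
have [ij_F ji_F] : (i == j) = false /\ (j == i) = false.
  by rewrite [j == i]eq_sym (negbTE neq_ij).
rewrite edge_to_loopsE !evec_subE mxE.
case: ifP => [/orP [] /andP [/eqP -> /eqP ->] | not_ij].
- rewrite !eqxx ij_F ji_F /=.
  by rewrite ?(mulr1n, mulr0n, subr0, sub0r, mulrN, mulNr, mulr1, mul1r, subrr).
- rewrite !eqxx ij_F ji_F Aji /=.
  by rewrite ?(mulr1n, mulr0n, subr0, sub0r, mulrN, mulNr, mulr1, mul1r, subrr).
rewrite lerDl mulr_ge0 //; move: not_ij.
by case: (k == i); case: (k == j); case: (l == i); case: (l == j) => //= _;
  rewrite ?(mulr1n, mulr0n, subrr, subr0, sub0r, mul0r, mulr0, mulr1, mulNr, mulrN,
            opprK, oppr0) ?ler01.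
Qed.

Section Walk.
Variable A : 'M[R]_n.
Hypotheses (Asym : A^T = A) (A_ge0 : forall k l, 0 <= A k l).
Hypotheses (d_gt0 : forall k, 0 < degv A k 0) (noncut : ~ cut_edge A i j).

Lemma posdef_shifted_laplacian_edge_to_loops :
  posdef (shifted_laplacian (edge_to_loops A)).
Proof.
apply: posdef_shifted_laplacian; first exact: edge_to_loops_sym.
- move=> k l; apply: le_trans (del_edge_le_edge_to_loops Asym (A_ge0 i j) k l).
  by rewrite mxE; case: ifP.
- by move=> k; rewrite degv_edge_to_loops.
apply: connected_le (del_edge_le_edge_to_loops Asym (A_ge0 i j)) _.
by move=> k l; apply/negPn/negP => disc; apply: noncut => conn; rewrite conn in disc.
Qed.

Lemma kemeny_edge_to_loops :
  kemeny (invmx (degmx A) *m edge_to_loops A) =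
  real_complex R (\tr (invmx (shifted_laplacian A - A i j *: (v *m v^T)) *m degmx A)) - 1.
Proof.
have n_gt0 : (0 < n)%N := leq_ltn_trans (leq0n i) (ltn_ord i).
have dhat_gt0 k : 0 < degv (edge_to_loops A) k 0 by rewrite degv_edge_to_loops.
have := kemeny_walk n_gt0 dhat_gt0 (posdef_unitmx posdef_shifted_laplacian_edge_to_loops).
by rewrite degmx_edge_to_loops shifted_laplacian_edge_to_loops.
Qed.

End Walk.
End EdgeToLoops.

Theorem mainTheorem8 (R : rcfType) (n : nat) (A : 'M[R]_n) (i j : 'I_n) :
  A^T = A ->
  (forall k l, 0 <= A k l) ->
  (forall k, 0 < degv A k 0) ->
  connected A ->
  i != j ->
  0 < A i j ->
  ~ cut_edge A i j ->
  let d := degv A in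
  let D := degmx A in
  let v := evec R i - evec R j in
  let Ahat := A + A i j *: (v *m v^T) in
  let c := kemeny (invmx D *m Ahat) - kemeny (invmx D *m A) in
  let S := D - A + (vol A)^-1 *: (d *m d^T) in
  let x := invmx S *m v in
  let alpha := A i j * (x i 0 - x j 0) in
  let beta := A i j * (x^T *m D *m x) 0 0 in
  [/\ S^T = S, posdef S, alpha != 1 & c = real_complex R (beta / (1 - alpha))].
Proof.
move=> Asym A_ge0 d_gt0 Aconn neq_ij _ noncut d D v Ahat c S x alpha beta.
have n_gt0 : (0 < n)%N := leq_ltn_trans (leq0n i) (ltn_ord i).
have Ssym : S^T = S := shifted_laplacian_sym Asym.
have Spd : posdef S := posdef_shifted_laplacian Asym A_ge0 d_gt0 Aconn.
have unitS := posdef_unitmx Spd.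
have alphaE : A i j * (v^T *m x) 0 0 = alpha by rewrite tr_evec_sub_mul mxE mulr1n.
have alpha_neq1 : alpha != 1.
  rewrite -alphaE sub_sym_rank1_unitmx_neq1 // -shifted_laplacian_edge_to_loops.
  exact/posdef_unitmx/posdef_shifted_laplacian_edge_to_loops.
split => //; rewrite /c kemeny_edge_to_loops // (kemeny_walk n_gt0 d_gt0 unitS).
by rewrite opprB addrA subrK -rmorphB mxtrace_invmx_sub_sym_rank1 // alphaE.
Qed.
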